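(* Let $a=\{a_1,\ldots,a_n\}$ be a list of positive integers and for $\epsilon\in\mathbb{R}$ let $$q^h_{a,\epsilon}(x):=\sum_i x_i^4+\Big(\big(\sum_i a_ix_i\big)^2-2\sum_i x_i^2\Big)\Big(\frac1n\sum_i x_i^2\Big)+(n-\epsilon)\Big(\frac1n\sum_i x_i^2\Big)^2 .$$ Then the linear program $\max_{\epsilon\in\mathbb{R}}\{\epsilon : q^h_{a,\epsilon} \text{ is dsos}\}$ is feasible, i.e., there exists $\epsilon\in\mathbb{R}$ such that $q^h_{a,\epsilon}$ is dsos.
   Context: Let $z(x,2)$ be the vector of all monomials of degree exactly $2$ in $x=(x_1,\ldots,x_n)$. A quartic form $p$ is dsos (diagonally-dominant-sum-of-squares) if $p(x)=z(x,2)^TQz(x,2)$ for some symmetric diagonally dominant matrix $Q$, where a symmetric matrix $Q$ is diagonally dominant if $q_{ii}\ge\sum_{j\ne i}|q_{ij}|$ for all $i$. *)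

From HB Require Import structures.
From mathcomp Require Import all_boot all_order all_algebra.
From mathcomp Require Import reals.
Set Implicit Arguments. Unset Strict Implicit. Unset Printing Implicit Defensive.
Import Order.TTheory GRing.Theory Num.Theory.
Local Open Scope ring_scope.

(* Index type of the monomials of degree exactly 2 in n variables:
   the pairs (i, j) with i <= j, standing for x_i * x_j. *)
Definition mon2 (n : nat) := {p : 'I_n * 'I_n | (p.1 <= p.2)%N}.

Definition z2 {R : realType} {n : nat} (x : 'I_n -> R) (m : mon2 n) : R :=
  x (sval m).1 * x (sval m).2.

Definition symmetric_mx {R : realType} {n : nat} (Q : mon2 n -> mon2 n -> R) :=
  forall i j, Q i j = Q j i.

Definition diag_dominant {R : realType} {n : nat} (Q : mon2 n -> mon2 n -> R) :=
  forall i, \sum_(j | j != i) `|Q i j| <= Q i i.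

Definition dsos {R : realType} {n : nat} (p : ('I_n -> R) -> R) : Prop :=
  exists Q : mon2 n -> mon2 n -> R,
    symmetric_mx Q /\ diag_dominant Q /\
    forall x, p x = \sum_(i : mon2 n) \sum_(j : mon2 n) z2 x i * Q i j * z2 x j.

Definition qh {R : realType} {n : nat} (a : 'I_n -> nat) (eps : R)
  (x : 'I_n -> R) : R :=
  let s2 := \sum_i x i ^+ 2 in
  \sum_i x i ^+ 4
  + ((\sum_i (a i)%:R * x i) ^+ 2 - 2 * s2) * (s2 / n%:R)
  + (n%:R - eps) * (s2 / n%:R) ^+ 2.

(* With L = sum_i a_i x_i and s = sum_i x_i^2, the choice eps = n - n^2 c - 2n
   turns q^h_{a,eps} into sum_i x_i^4 + (1/n) sum_i (x_i L)^2 + c s^2.  The first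
   two terms are z^T B z for a symmetric B (a diagonal matrix plus a Gram matrix
   of the coefficient vectors of the quadratics x_i L), while s^2 = z^T D z with
   D diagonal and D_mm >= 1.  Hence B + c D is diagonally dominant as soon as c
   bounds the absolute row sums of B. *)

From HB Require Import structures.
From mathcomp Require Import all_boot all_order all_algebra.
From mathcomp Require Import reals.
From mathcomp Require Import ring lra.
Set Implicit Arguments. Unset Strict Implicit. Unset Printing Implicit Defensive.
Import Order.TTheory GRing.Theory Num.Theory.
Local Open Scope ring_scope.

Section Mon2.
Variables (R : realType) (n : nat).
Implicit Types (x : 'I_n -> R) (Q B : mon2 n -> mon2 n -> R).

Definition quad_form Q x : R := \sum_i \sum_j z2 x i * Q i j * z2 x j.

Definition diag_mon2 (d : mon2 n -> R) : mon2 n -> mon2 n -> R :=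
  fun m m' => if m == m' then d m else 0.

Lemma quad_formD Q1 Q2 x :
  quad_form (fun m m' => Q1 m m' + Q2 m m') x = quad_form Q1 x + quad_form Q2 x.
Proof.
rewrite -big_split; apply: eq_bigr => m _.
by rewrite -big_split /=; apply: eq_bigr => m' _; ring.
Qed.

Lemma quad_formZ (k : R) Q x :
  quad_form (fun m m' => k * Q m m') x = k * quad_form Q x.
Proof.
rewrite mulr_sumr; apply: eq_bigr => m _.
by rewrite mulr_sumr; apply: eq_bigr => m' _; ring.
Qed.

Lemma quad_form_diag d x :
  quad_form (diag_mon2 d) x = \sum_(m : mon2 n) d m * z2 x m ^+ 2.
Proof.
apply: eq_bigr => m _; rewrite (bigD1 m) //= big1 ?addr0 /diag_mon2 ?eqxx; first ring.
by move=> m' /negbTE; rewrite eq_sym => ->; rewrite mulr0 mul0r.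
Qed.

Lemma quad_form_gram (I : finType) (v : I -> mon2 n -> R) x :
  quad_form (fun m m' => \sum_i v i m * v i m') x =
  \sum_i (\sum_(m : mon2 n) z2 x m * v i m) ^+ 2.
Proof.
rewrite /quad_form; under eq_bigr do under eq_bigr do rewrite mulr_sumr mulr_suml.
under eq_bigr do rewrite exchange_big /=; rewrite exchange_big /=.
apply: eq_bigr => i _; rewrite expr2 mulr_suml; apply: eq_bigr => m _.
by rewrite mulr_sumr; apply: eq_bigr => m' _; ring.
Qed.

Lemma symmetric_mx_add_diag B d :
  symmetric_mx B -> symmetric_mx (fun m m' => B m m' + diag_mon2 d m m').
Proof.
move=> symB m m'; rewrite symB /diag_mon2 eq_sym.
by case: eqP => // ->.
Qed.

Lemma diag_dominant_add_diag B d :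
  (forall m, \sum_m' `|B m m'| <= d m) ->
  diag_dominant (fun m m' => B m m' + diag_mon2 d m m').
Proof.
move=> rowB m; rewrite /diag_mon2 eqxx.
have -> : \sum_(m' | m' != m) `|B m m' + (if m == m' then d m else 0)|
          = \sum_(m' | m' != m) `|B m m'|.
  by apply: eq_bigr => m' /negbTE; rewrite eq_sym => ->; rewrite addr0.
have := rowB m; rewrite (bigD1 m) //=.
have := ler_norm (B m m); rewrite -normrN; have := ler_norm (- B m m).
lra.
Qed.

Lemma sum_mon2 (G : 'I_n * 'I_n -> R) :
  \sum_(p : 'I_n * 'I_n | (p.1 <= p.2)%N) G p = \sum_(m : mon2 n) G (sval m).
Proof.
rewrite (reindex_omap (sval : mon2 n -> _) insub); last first.
  by move=> p lep; rewrite insubT.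
by apply: eq_bigl => -[p lep] /=; rewrite insubT ?lep /= eqxx.
Qed.

Lemma sum_pairs_mon2 (F : 'I_n -> 'I_n -> R) :
  \sum_i \sum_j F i j =
  \sum_(m : mon2 n) (F (sval m).1 (sval m).2 +
          ((sval m).1 != (sval m).2)%:R * F (sval m).2 (sval m).1).
Proof.
rewrite pair_bigA /= (bigID (fun p : 'I_n * 'I_n => (p.1 <= p.2)%N)) /=.
rewrite big_split /= -(sum_mon2 (fun p => F p.1 p.2)); congr (_ + _).
rewrite -(sum_mon2 (fun p => (p.1 != p.2)%:R * F p.2 p.1)).
rewrite (reindex_inj (h := fun p : 'I_n * 'I_n => (p.2, p.1))); last first.
  by move=> [i j] [k l] /= [-> ->].
rewrite /= [RHS]big_mkcond [LHS]big_mkcond; apply: eq_bigr => -[i j] _ /=.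
rewrite -ltnNge ltn_neqAle.
by case: (i <= j)%N; case: (i != j); rewrite /= ?mul1r ?mul0r.
Qed.

Lemma sum_pow4_mon2 x :
  \sum_i x i ^+ 4 = \sum_(m : mon2 n) ((sval m).1 == (sval m).2)%:R * z2 x m ^+ 2.
Proof.
have -> : \sum_i x i ^+ 4 = \sum_i \sum_j (i == j)%:R * (x i * x j) ^+ 2.
  apply: eq_bigr => i _; rewrite (bigD1 i) //= big1 ?addr0 ?eqxx /=; first ring.
  by move=> j /negbTE; rewrite eq_sym => ->; rewrite mul0r.
rewrite sum_pairs_mon2; apply: eq_bigr => -[[i j] leij] _; rewrite /z2 /= eq_sym.
by case: (j == i); rewrite /= ?mul0r ?mul1r ?addr0.
Qed.

Lemma sqr_sum_sq_mon2 x :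
  (\sum_i x i ^+ 2) ^+ 2 =
  \sum_(m : mon2 n) (1 + ((sval m).1 != (sval m).2)%:R) * z2 x m ^+ 2.
Proof.
have -> : (\sum_i x i ^+ 2) ^+ 2 = \sum_i \sum_j (x i * x j) ^+ 2.
  rewrite expr2 mulr_suml; apply: eq_bigr => i _.
  by rewrite mulr_sumr; apply: eq_bigr => j _; ring.
rewrite sum_pairs_mon2; apply: eq_bigr => -[[i j] leij] _; rewrite /z2 /=; ring.
Qed.

Definition mul_lin_coef (a : 'I_n -> R) (i : 'I_n) (m : mon2 n) : R :=
  ((sval m).1 == i)%:R * a (sval m).2 +
  (((sval m).1 != (sval m).2) && ((sval m).2 == i))%:R * a (sval m).1.

Lemma mul_lin_coefP a x i :
  \sum_(m : mon2 n) z2 x m * mul_lin_coef a i m = x i * \sum_k a k * x k.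
Proof.
have -> : x i * \sum_k a k * x k = \sum_p \sum_q (p == i)%:R * (a q * (x p * x q)).
  rewrite [RHS](bigD1 i) //= eqxx [X in _ + X]big1 ?addr0; last first.
    by move=> p /negbTE ->; rewrite big1 // => q _; rewrite mul0r.
  by rewrite mulr_sumr; apply: eq_bigr => k _ /=; ring.
rewrite sum_pairs_mon2; apply: eq_bigr => -[[p q] lepq] _; rewrite /z2 /mul_lin_coef /=.
by case: (p == i); case: (q == i); case: (p == q); rewrite /=; ring.
Qed.

Lemma dsos_add_sqr_norm B :
  symmetric_mx B ->
  exists c : R, dsos (fun x => quad_form B x + c * (\sum_i x i ^+ 2) ^+ 2).
Proof.
move=> symB; pose c := \sum_(m : mon2 n) \sum_m' `|B m m'|.
pose d (m : mon2 n) := c * (1 + ((sval m).1 != (sval m).2)%:R).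
have c_ge0 : 0 <= c by apply: sumr_ge0 => m _; apply: sumr_ge0.
exists c, (fun m m' => B m m' + diag_mon2 d m m'); split; [|split].
- exact: symmetric_mx_add_diag.
- apply: diag_dominant_add_diag => m.
  have row_le_c : \sum_m' `|B m m'| <= c.
    rewrite [leRHS](bigD1 m) //= lerDl; apply: sumr_ge0 => m0 _.
    by apply: sumr_ge0.
  apply: (le_trans row_le_c); rewrite /d ler_peMr //.
  by rewrite lerDl.
- move=> x; rewrite -[RHS]/(quad_form _ x) quad_formD quad_form_diag.
  rewrite sqr_sum_sq_mon2 mulr_sumr.
  by congr (_ + _); apply: eq_bigr => m _; rewrite mulrA.
Qed.

End Mon2.

Theorem theorem5p4 (R : realType) (n : nat) (a : 'I_n -> nat)
  (ha : forall i, (0 < a i)%N) :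
  exists eps : R, dsos (qh a eps).
Proof.
pose v := mul_lin_coef (fun i => (a i)%:R : R).
pose B m m' := (n%:R)^-1 * \sum_i v i m * v i m'
               + diag_mon2 (fun m => ((sval m).1 == (sval m).2)%:R) m m'.
have symB : symmetric_mx B.
  apply: symmetric_mx_add_diag => m m'; congr (_ * _).
  by apply: eq_bigr => i _; rewrite mulrC.
have [c [Q [symQ [ddQ formQ]]]] := dsos_add_sqr_norm symB.
exists (n%:R - n%:R ^+ 2 * c - 2 * n%:R), Q; split; [done|split; first done].
move=> x; rewrite -formQ /B quad_formD quad_formZ quad_form_gram quad_form_diag.
rewrite -sum_pow4_mon2 /qh.
set L := \sum_k _ * x k; set s := \sum_i x i ^+ 2.
have -> : \sum_i (\sum_(m : mon2 n) z2 x m * v i m) ^+ 2 = L ^+ 2 * s.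
  rewrite /s mulr_sumr; apply: eq_bigr => i _.
  by rewrite mul_lin_coefP -/L; ring.
have [n0|n_gt0] := posnP n.
  have -> : s = 0 by rewrite /s big1 // => i _; have := ltn_ord i; rewrite {2}n0.
  by clearbody L s; ring.
have n_neq0 : (n%:R : R) != 0 by rewrite pnatr_eq0 -lt0n.
by clearbody L s; field.
Qed.
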